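(* Let $H_1,G_1,H_2,G_2,H_3$ be finite groups and $s_1:G_1\to H_1$, $t_1:G_1\to H_2$, $s_2:G_2\to H_2$, $t_2:G_2\to H_3$ group homomorphisms, viewed as orbifold maps $\bullet/H_1\xleftarrow{s_1}\bullet/G_1\xrightarrow{t_1}\bullet/H_2\xleftarrow{s_2}\bullet/G_2\xrightarrow{t_2}\bullet/H_3$. Let $\bullet/G_1\times_{\bullet/H_2}\bullet/G_2$ be the fiber product, i.e. the action groupoid $(G_1\times G_2)\ltimes H_2$ with action $(g_1,g_2)\cdot h=s_2(g_2)\,h\,t_1(g_1)^{-1}$, equipped with the maps $s_3$ to $\bullet/H_1$ induced by $(g_1,g_2)\mapsto s_1(g_1)$ and $t_3$ to $\bullet/H_3$ induced by $(g_1,g_2)\mapsto t_2(g_2)$. Then, as maps $H^*(\bullet/H_1;\mathbb{R})\to H^*(\bullet/H_3;\mathbb{R})$, $$(t_2)_*\circ s_2^*\circ (t_1)_*\circ s_1^*=(t_3)_*\circ s_3^*.$$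
   Context: For a finite group $K$, $\bullet/K$ denotes the orbifold given by the action groupoid $K\ltimes\{\mathrm{pt}\}$; its de Rham cohomology is $\mathbb{R}$ in degree $0$, and the integral over an orbifold $M/K$ (global quotient) of a $K$-invariant compactly supported form $\omega$ is $\frac{1}{|K|}\int_M\omega$, so $\int_{\bullet/K}1=1/|K|$; integrals over a finite disjoint union of such point orbifolds are sums. Pullback $f^*$ on cohomology is the usual one, and pushforward $f_*$ along a proper map $f:X\to Z$ of compact zero-dimensional orbifolds is defined by $\int_Z f_*(\alpha)\wedge\beta=\int_X\alpha\wedge f^*\beta$. *)

From HB Require Import structures.
From mathcomp Require Import all_boot all_order all_algebra all_fingroup.
From mathcomp Require Import reals.
From Stdlib Require Import ClassicalEpsilon.
Set Implicit Arguments. Unset Strict Implicit. Unset Printing Implicit Defensive.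
Import GRing.Theory Num.Theory.
Local Open Scope ring_scope.

(* A zero-dimensional orbifold given by an action groupoid K \ltimes M,
   with K a finite group acting (on the left) on a finite set M. *)
Record orb := Orb {
  og : finGroupType;
  osp : finType;
  oact : og -> osp -> osp }.

Definition ptorb (K : finGroupType) : orb := @Orb K unit (fun _ x => x).

(* A map of action groupoids: a group homomorphism together with a map of
   spaces (equivariant in the situations considered). *)
Record omap (X Y : orb) := OMap {
  ohom : og X -> og Y;
  ospmap : osp X -> osp Y }.

Section Forms.
Variable R : realType.

(* Differential forms on a 0-dimensional orbifold are functions on the
   (discrete) space; all are closed and none exact, so de Rham cohomology
   H^*(M/K) = H^0 = K-invariant functions M -> R. *)
Definition is_inv (X : orb) (w : osp X -> R) : Prop :=
  forall (k : og X) (x : osp X), w (oact k x) = w x.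

(* Integral over M/K of an invariant (top-degree = 0-)form: (1/|K|) \int_M w,
   and \int_M over a finite discrete M is the sum. *)
Definition orb_int (X : orb) (w : osp X -> R) : R :=
  (#|og X|%:R)^-1 * \sum_(x : osp X) w x.

Definition pullback (X Y : orb) (f : omap X Y) (b : osp Y -> R) : osp X -> R :=
  fun x => b (ospmap f x).

Definition is_pushforward (X Z : orb) (f : omap X Z) (a : osp X -> R)
    (c : osp Z -> R) : Prop :=
  is_inv c /\
  forall b : osp Z -> R, is_inv b ->
    orb_int (fun z => c z * b z) = orb_int (fun x => a x * pullback f b x).

Definition pushforward (X Z : orb) (f : omap X Z) (a : osp X -> R) : osp Z -> R :=
  epsilon (inhabits (fun _ => 0)) (is_pushforward f a).

End Forms.

Definition ptmap (G H : finGroupType) (s : {morphism [set: G] >-> H}) :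
  omap (ptorb G) (ptorb H) := @OMap (ptorb G) (ptorb H) (fun g => s g) (fun _ => tt).

Definition fibprod (G1 H2 G2 : finGroupType)
    (t1 : {morphism [set: G1] >-> H2}) (s2 : {morphism [set: G2] >-> H2}) : orb :=
  @Orb (G1 * G2)%type H2 (fun g h => (s2 g.2 * h * (t1 g.1)^-1)%g).

Definition fib_s3 (G1 H1 H2 G2 : finGroupType) (s1 : {morphism [set: G1] >-> H1})
    (t1 : {morphism [set: G1] >-> H2}) (s2 : {morphism [set: G2] >-> H2}) :
  omap (fibprod t1 s2) (ptorb H1) :=
  @OMap (fibprod t1 s2) (ptorb H1) (fun g : (G1 * G2)%type => s1 g.1) (fun _ => tt).

Definition fib_t3 (G1 H2 G2 H3 : finGroupType)
    (t1 : {morphism [set: G1] >-> H2}) (s2 : {morphism [set: G2] >-> H2})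
    (t2 : {morphism [set: G2] >-> H3}) :
  omap (fibprod t1 s2) (ptorb H3) :=
  @OMap (fibprod t1 s2) (ptorb H3) (fun g : (G1 * G2)%type => t2 g.2) (fun _ => tt).

(* A pushforward is unique: the pairing (c, b) |-> \int c b is positive definite
   on invariant functions.  Testing against constants shows that the pushforward
   of a along any map M/K -> •/H is the constant |H|/|K| * \sum_M a.  Hence both
   sides of the identity are the constant |H3| |H2| / (|G1| |G2|) * a. *)
From Pilot Require Import Defs.
From mathcomp Require Import all_boot all_order all_algebra all_fingroup.
From mathcomp Require Import reals.
From mathcomp Require Import ring.
From Stdlib Require Import ClassicalEpsilon FunctionalExtensionality.
Set Implicit Arguments. Unset Strict Implicit. Unset Printing Implicit Defensive.
Import GRing.Theory Num.Theory.
Local Open Scope ring_scope.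

Lemma natr_card_group_neq0 (R : numDomainType) (G : finGroupType) :
  (#|G|%:R : R) != 0.
Proof. by rewrite pnatr_eq0 -lt0n; apply/card_gt0P; exists 1%g. Qed.

Lemma sum_unit (R : nmodType) (F : unit -> R) : \sum_(x : unit) F x = F tt.
Proof. by rewrite (bigD1 tt) //= big_pred0 ?addr0 // => -[]. Qed.

Section Pushforward.
Variable R : realType.

Lemma is_pushforward_uniq (X Z : orb) (f : Defs.omap X Z) (a : osp X -> R)
    (c1 c2 : osp Z -> R) :
  is_pushforward f a c1 -> is_pushforward f a c2 -> c1 = c2.
Proof.
move=> [inv1 int1] [inv2 int2]; apply: functional_extensionality => z.
have inv12 : is_inv (fun z => c1 z - c2 z) by move=> k y; rewrite inv1 inv2.
have : orb_int (fun z => c1 z * (c1 z - c2 z)) =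
       orb_int (fun z => c2 z * (c1 z - c2 z)) by rewrite int1 // int2.
rewrite /orb_int => /(mulfI (invr_neq0 (natr_card_group_neq0 _ _))) /eqP.
rewrite -subr_eq0 -sumrB.
under eq_bigr do rewrite -mulrBl -expr2.
move=> /eqP sq0; apply/eqP; rewrite -subr_eq0 -sqrf_eq0; apply/eqP.
by apply: (psumr_eq0P _ sq0) => // y _; rewrite sqr_ge0.
Qed.

Lemma pushforwardE (X Z : orb) (f : Defs.omap X Z) (a : osp X -> R)
    (c : osp Z -> R) :
  is_pushforward f a c -> pushforward f a = c.
Proof.
move=> push_c; apply: (is_pushforward_uniq _ push_c).
exact: epsilon_spec (ex_intro _ c push_c).
Qed.

Lemma is_pushforward_pt (X : orb) (H : finGroupType)
    (f : Defs.omap X (ptorb H)) (a : osp X -> R) :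
  is_pushforward f a (fun _ => #|H|%:R / #|og X|%:R * \sum_x a x).
Proof.
split=> // b _; rewrite /orb_int /pullback /= sum_unit.
have to_pt x : ospmap f x = tt by case: (ospmap f x).
under [in RHS]eq_bigr do rewrite to_pt.
by rewrite -big_distrl /= !mulrA mulVf ?natr_card_group_neq0 // mul1r -!mulrA.
Qed.

Lemma pushforward_ptE (X : orb) (H : finGroupType)
    (f : Defs.omap X (ptorb H)) (a : osp X -> R) :
  pushforward f a = fun _ => #|H|%:R / #|og X|%:R * \sum_x a x.
Proof. exact/pushforwardE/is_pushforward_pt. Qed.

End Pushforward.

Theorem proposition2p9 (R : realType) (H1 G1 H2 G2 H3 : finGroupType)
  (s1 : {morphism [set: G1] >-> H1}) (t1 : {morphism [set: G1] >-> H2})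
  (s2 : {morphism [set: G2] >-> H2}) (t2 : {morphism [set: G2] >-> H3})
  (a : osp (ptorb H1) -> R) :
  is_inv a ->
  pushforward (ptmap t2) (pullback (ptmap s2)
    (pushforward (ptmap t1) (pullback (ptmap s1) a)))
  = pushforward (fib_t3 t1 s2 t2) (pullback (fib_s3 s1 t1 s2) a).
Proof.
(* [is_inv a] is automatic: a lives on a point. *)
move=> _; rewrite !pushforward_ptE; apply: functional_extensionality => _.
rewrite /pullback /= !sum_unit sumr_const card_prod (eq_card (B := H2)) //.
by rewrite natrM invfM; ring.
Qed.
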